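(* Let $\mathcal{D}$ be a finite domain of search histories with $|\mathcal{D}|\ge 2$ and $U\ge 1$. For any search log $S\in\mathcal{D}^U$, every output of Algorithm $\hat{\mathcal{A}}$ on $S$ constitutes a privacy breach according to $\epsilon$-differential privacy for every $\epsilon$: that is, for every $O$ with $\Pr[\hat{\mathcal{A}}(S)=O]>0$ there is a neighboring search log $S'$ with $\Pr[\hat{\mathcal{A}}(S)=O] > e^{\epsilon}\Pr[\hat{\mathcal{A}}(S')=O]$.
   Context: A search log is an element $S=(S_1,\dots,S_U)\in\mathcal{D}^U$, where $S_i$ is user $i$'s search history. Two search logs are neighboring if they differ in exactly one user's history. Algorithm $\hat{\mathcal{A}}$, on input $S$, samples uniformly at random an element of $\mathcal{D}\setminus\{S_1\}$ and returns it. *)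

From mathcomp Require Import all_boot all_order all_algebra.
From mathcomp Require Import reals sequences.
Set Implicit Arguments. Unset Strict Implicit. Unset Printing Implicit Defensive.
Import Order.TTheory GRing.Theory Num.Theory.
Local Open Scope ring_scope.

Definition search_log (D : finType) (U : nat) := {ffun 'I_U -> D}.

Definition neighboring (D : finType) (U : nat) (S S' : search_log D U) : Prop :=
  #|[set i : 'I_U | S i != S' i]| = 1%N.

Definition user1 (U : nat) (hU : (0 < U)%N) : 'I_U := Ordinal hU.

(* Pr[hatA(S) = O]: hatA samples uniformly at random from D \ {S_1}. *)
Definition hatA_prob (R : realType) (D : finType) (U : nat) (hU : (0 < U)%N)
    (S : search_log D U) (O : D) : R :=
  let supp := [set~ S (user1 hU)] in
  if O \in supp then (#|supp|%:R)^-1 else 0.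

From mathcomp Require Import all_boot all_order all_algebra.
From mathcomp Require Import reals sequences.
Import Order.TTheory GRing.Theory Num.Theory.
Local Open Scope ring_scope.

(* Any output O of hatA(S) differs from S_1; the neighbor S' obtained by
   replacing S_1 with O can never output O, so no multiplicative bound
   e^eps relates the two output probabilities. *)

Definition set_user {D : finType} {U : nat} (S : search_log D U) (i : 'I_U) (x : D) :
  search_log D U := [ffun j => if j == i then x else S j].

Lemma neighboring_set_user {D : finType} {U : nat} (S : search_log D U) i x :
  x != S i -> neighboring S (set_user S i x).
Proof.
move=> xNSi; rewrite /neighboring -(cards1 i); apply: eq_card => j.
rewrite !inE ffunE.
by have [->|_] := eqVneq j i; rewrite ?eqxx // eq_sym.
Qed.

Lemma hatA_prob_gt0 {R : realType} {D : finType} {U : nat} {hU : (0 < U)%N}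
    {S : search_log D U} {O : D} :
  0 < hatA_prob R hU S O -> O != S (user1 hU).
Proof. by rewrite /hatA_prob !inE; case: ifP; rewrite ?ltxx. Qed.

Lemma hatA_prob_user1 (R : realType) {D : finType} {U : nat} (hU : (0 < U)%N)
    (S : search_log D U) (O : D) : S (user1 hU) = O -> hatA_prob R hU S O = 0.
Proof. by move=> <-; rewrite /hatA_prob !inE eqxx. Qed.

Theorem proposition3 (R : realType) (D : finType) (U : nat)
    (hD : (1 < #|D|)%N) (hU : (0 < U)%N) (S : search_log D U) (eps : R) (O : D) :
  0 < hatA_prob R hU S O ->
  exists S' : search_log D U,
    neighboring S S' /\ hatA_prob R hU S O > expR eps * hatA_prob R hU S' O.
Proof.
move=> pO_gt0; have ONS1 := hatA_prob_gt0 pO_gt0.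
exists (set_user S (user1 hU) O); split; first exact: neighboring_set_user.
by rewrite hatA_prob_user1 ?mulr0 // ffunE eqxx.
Qed.
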